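(* Let $(X,\mathcal{B})$ be a $t$-$(v,k,\lambda)$ design with $b$ blocks. Then there is a way to write each block $B\in\mathcal{B}$ as an ordered $k$-tuple of its elements such that every point $x\in X$ occurs in each of the $k$ positions in exactly $b/v$ of the ordered blocks if and only if $v$ divides $b$ (equivalently, $k$ divides the number $r=bk/v$ of blocks containing a given point).
   Context: A $t$-$(v,k,\lambda)$ design ($t\ge1$, $t\le k\le v$) is a pair $(X,\mathcal{B})$ where $X$ is a set of $v$ points and $\mathcal{B}$ is a collection of distinct $k$-subsets of $X$ (blocks) such that every $t$-subset of $X$ is contained in exactly $\lambda$ blocks; $b=|\mathcal{B}|$. Every point lies in the same number $r$ of blocks, and $bk=vr$. *)

From mathcomp Require Import all_boot.
Set Implicit Arguments. Unset Strict Implicit. Unset Printing Implicit Defensive.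

(* A t-(v,k,lambda) design on the point set T (v = #|T|): Bs is a set of
   (hence distinct) k-subsets of T such that every t-subset of T lies in
   exactly lam blocks; 1 <= t <= k <= v. *)
Definition is_design (T : finType) (t k lam : nat) (Bs : {set {set T}}) : Prop :=
  [/\ 1 <= t, t <= k, k <= #|T|,
      (forall B, B \in Bs -> #|B| = k) &
      (forall S : {set T}, #|S| = t -> #|[set B in Bs | S \subset B]| = lam)].

Definition block_ordering (T : finType) (k : nat) (Bs : {set {set T}})
    (f : {set T} -> k.-tuple T) : Prop :=
  forall B, B \in Bs -> uniq (f B) /\ (forall x, (x \in f B) = (x \in B)).

(* Every point occurs in every position in exactly b/v ordered blocks;
   written (count) * v = b to avoid rational division. *)
Definition balanced_ordering (T : finType) (k : nat) (Bs : {set {set T}})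
    (f : {set T} -> k.-tuple T) : Prop :=
  forall (x : T) (i : 'I_k),
    #|[set B in Bs | tnth (f B) i == x]| * #|T| = #|Bs|.

From mathcomp Require Import all_boot perm zify.
Set Implicit Arguments. Unset Strict Implicit. Unset Printing Implicit Defensive.

(* Double counting the pairs (S, B) with x in S, S a
   t-subset of the block B, shows r_x * C(k-1,t-1) = lam * C(v-1,t-1), so
   the replication number r_x is independent of x; counting the flags
   (y, B) with y in B then gives v * r = b * k, whence v | b <-> k | r.

   A balanced ordering forces v | b (count the blocks
   whose first entry is a fixed point).  Conversely, if b = m v then every
   point lies in r = k m blocks.  Start from any ordering and measure it by
   the potential  sum_{y,l} c(y,l)^2,  where c(y,l) counts the ordered blocks
   having y at position l.  If some c(x,i) >= c(x,j) + 2, view every block B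
   as an arc from its i-th to its j-th entry: some point w reachable from x
   has more incoming than outgoing arcs, and swapping positions i and j in
   the blocks of a simple path from x to w moves one occurrence of x from
   position i to j and one of w from j to i, strictly lowering the potential.
   Hence an ordering of minimal potential has all c(y,l) = m. *)

Lemma card_set_sum (U : finType) (A : {set U}) (Q : pred U) :
  #|[set B in A | Q B]| = \sum_(B in A) Q B.
Proof.
rewrite -sum1_card big_mkcond [RHS]big_mkcond /=.
by apply: eq_bigr => B _; rewrite inE; case: (B \in A); case: (Q B).
Qed.

Lemma sum_indicator_in (V : finType) (A : {pred V}) (a : V) :
  \sum_(w in A) (a == w) = (a \in A).
Proof.
have [aA | naA] := boolP (a \in A).
  rewrite (bigD1 a) //= eqxx big1 // => w /andP[_ /negbTE].
  by rewrite eq_sym => ->.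
by rewrite big1 // => w wA; case: eqP => // aw; rewrite aw wA in naA.
Qed.

Lemma ltn_sum_pointwise (I : finType) (F G : I -> nat) (a : I) :
  (forall i, F i <= G i) -> F a < G a -> \sum_i F i < \sum_i G i.
Proof.
move=> le lt; rewrite (ltn_leqif (leqif_sum (fun i _ => leqif_eq (le i)))).
by apply/forallPn; exists a; rewrite neq_ltn lt.
Qed.

(* The t-subsets of A through a fixed point x of A correspond to the
   (t-1)-subsets of A minus x. *)
Lemma card_subsets_through (T : finType) (A : {set T}) (x : T) (t : nat) :
  0 < t -> x \in A ->
  #|[set S : {set T} | (x \in S) && (S \subset A) && (#|S| == t)]|
    = 'C(#|A|.-1, t.-1).
Proof.
move=> t0 xA; set D := [set S : {set T} | _].
have x_notin (S' : {set T}) : S' \subset A :\ x -> x \notin S'.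
  by move=> sA; apply/negP => /(subsetP sA); rewrite !inE eqxx.
have -> : 'C(#|A|.-1, t.-1)
    = #|[set S' : {set T} | S' \subset A :\ x & #|S'| == t.-1]|.
  by rewrite cards_draws (cardsD1 x A) xA.
rewrite -(@card_in_imset _ _ (fun S => S :\ x) D); last first.
  move=> S1 S2; rewrite !inE => /andP[/andP[xS1 _] _] /andP[/andP[xS2 _] _] E.
  by rewrite -(setD1K xS1) -(setD1K xS2) E.
apply: eq_card => S'; rewrite [in RHS]inE; apply/imsetP/idP.
  case=> S; rewrite !inE => /andP[/andP[xS sA] /eqP cS] ->.
  rewrite setSD //= (cardsD1 x S) xS in cS *; apply/eqP; lia.
move=> /andP[sA /eqP cS]; exists (x |: S'); last first.
  by rewrite setU1K ?x_notin.
rewrite inE setU11 /= subUset sub1set xA (subset_trans sA) ?subsetDl //=.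
by rewrite cardsU1 x_notin // cS; apply/eqP; lia.
Qed.

Definition replication (T : finType) (Bs : {set {set T}}) (x : T) : nat :=
  #|[set B in Bs | x \in B]|.

(* Double counting x in S, S a t-subset of a block B, gives
   r_x C(k-1,t-1) = lam C(v-1,t-1). *)
Lemma replication_binomial (T : finType) (t k lam : nat) (Bs : {set {set T}})
    (x : T) :
  is_design t k lam Bs ->
  replication Bs x * 'C(k.-1, t.-1) = lam * 'C(#|T|.-1, t.-1).
Proof.
case=> t1 _ _ Bk Hl.
set D := [set S : {set T} | (x \in S) && (S \subset [set: T]) && (#|S| == t)].
have lamE : \sum_(S in D) #|[set B in Bs | S \subset B]|
    = lam * 'C(#|T|.-1, t.-1).
  rewrite -cardsT -(@card_subsets_through _ _ x) ?inE // -/D mulnC.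
  rewrite -sum_nat_const; apply: eq_bigr => S.
  by rewrite inE => /andP[_ /eqP]; apply: Hl.
rewrite -lamE; under eq_bigr do rewrite card_set_sum.
rewrite exchange_big /replication card_set_sum big_distrl /=.
apply: eq_bigr => B BBs; have [xB | xnB] := boolP (x \in B); last first.
  rewrite mul0n; apply/esym/eqP; rewrite sum_nat_eq0; apply/forall_inP => S.
  rewrite inE => /andP[/andP[xS _] _]; case SB: (S \subset B) => //.
  by rewrite (subsetP SB x xS) in xnB.
rewrite mul1n -(Bk _ BBs) -(card_subsets_through t1 xB) -card_set_sum.
by apply: eq_card => S; rewrite !inE subsetT andbT -!andbA (andbC (S \subset B)).
Qed.

Lemma replication_const (T : finType) (t k lam : nat) (Bs : {set {set T}})
    (x y : T) :
  is_design t k lam Bs -> replication Bs x = replication Bs y.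
Proof.
move=> D; have [t1 tk _ _ _] := D.
have C0 : 0 < 'C(k.-1, t.-1) by rewrite bin_gt0; lia.
by apply/eqP; rewrite -(eqn_pmul2r C0) !(replication_binomial _ D).
Qed.

Lemma flag_count (T : finType) (k : nat) (Bs : {set {set T}}) :
  (forall B, B \in Bs -> #|B| = k) ->
  \sum_(y : T) replication Bs y = #|Bs| * k.
Proof.
move=> Bk; under eq_bigr do rewrite /replication card_set_sum.
rewrite exchange_big /= -sum_nat_const; apply: eq_bigr => B BBs.
rewrite -(Bk _ BBs) -sum1_card [RHS]big_mkcond /=.
by apply: eq_bigr => y _; case: (y \in B).
Qed.

Lemma design_replication (T : finType) (t k lam : nat) (Bs : {set {set T}})
    (x : T) :
  is_design t k lam Bs -> #|T| * replication Bs x = #|Bs| * k.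
Proof.
move=> D; have [_ _ _ Bk _] := D; rewrite -(flag_count Bk) -sum_nat_const.
by apply: eq_bigr => y _; apply: replication_const D.
Qed.

Lemma dvdn_exchange (v k b r : nat) :
  0 < v -> 0 < k -> v * r = b * k -> (v %| b) = (k %| r).
Proof.
move=> v0 k0 E; apply/dvdnP/dvdnP => -[m Hm]; exists m; apply/eqP.
  by rewrite -(eqn_pmul2l v0) E Hm; apply/eqP; lia.
by rewrite -(eqn_pmul2r k0) -E Hm; apply/eqP; lia.
Qed.

(* A family Bs of arcs B, from tl B to hd B, in a multidigraph on V. *)
Section Flow.
Variables (U V : finType) (Bs : {set U}) (tl hd : U -> V).

Definition out_deg (y : V) : nat := \sum_(B in Bs) (tl B == y).
Definition in_deg (y : V) : nat := \sum_(B in Bs) (hd B == y).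
Definition edge : rel V := fun u v => [exists B in Bs, (tl B == u) && (hd B == v)].

(* The arcs along a simple path from x to its end carry a unit flow:
   at every vertex, outgoing arcs plus sink = incoming arcs plus source. *)
Lemma path_flow (p : seq V) (x : V) : path edge x p -> uniq (x :: p) ->
  exists P : {set U}, [/\ P \subset Bs, (forall B, B \in P -> tl B \in x :: p) &
    forall y, \sum_(B in P) (tl B == y) + (y == last x p) =
              \sum_(B in P) (hd B == y) + (y == x)].
Proof.
elim: p x => [|z p IH] x /=.
  move=> _ _; exists set0; split=> [||y]; rewrite ?sub0set ?big_set0 //.
  by move=> B; rewrite inE.
case/andP=> /exists_inP[B0 B0Bs /andP[/eqP tlB0 /eqP hdB0]] pz /andP[xNzp uzp].
have [P [PBs Ptl Pflow]] := IH z pz uzp.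
have B0NP : B0 \notin P by apply/negP => /Ptl; rewrite tlB0 (negbTE xNzp).
exists (B0 |: P); split.
- by rewrite subUset sub1set B0Bs PBs.
- move=> B; rewrite in_setU1 => /orP[/eqP -> | /Ptl zp].
    by rewrite tlB0 mem_head.
  by rewrite in_cons zp orbT.
- move=> y; rewrite !big_setU1 //= tlB0 hdB0.
  by have := Pflow y; rewrite (eq_sym x y) (eq_sym z y); lia.
Qed.

Lemma sum_deg_over (R : {pred V}) (g : U -> V) :
  \sum_(w in R) \sum_(B in Bs) (g B == w) = \sum_(B in Bs) (g B \in R).
Proof. by rewrite exchange_big; apply: eq_bigr => B _; apply: sum_indicator_in. Qed.

(* A vertex with more outgoing than incoming arcs reaches one with more
   incoming than outgoing arcs (the reachable set is closed under arcs). *)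
Lemma reachable_deficit (x : V) : in_deg x < out_deg x ->
  exists2 w, connect edge x w & out_deg w < in_deg w.
Proof.
move=> xdef; pose R := [pred y | connect edge x y].
have [w | noDef] := pickP (fun w => R w && (out_deg w < in_deg w)).
  by case/andP => Rw wdef; exists w.
have le_in_out w : R w -> in_deg w <= out_deg w.
  by move=> Rw; rewrite leqNgt; have := noDef w; rewrite Rw /= => ->.
have closed B : B \in Bs -> tl B \in R -> hd B \in R.
  move=> BBs; rewrite !inE => /connect_trans; apply; apply: connect1.
  by apply/exists_inP; exists B; rewrite ?eqxx.
have out_le_in : \sum_(w in R) out_deg w <= \sum_(w in R) in_deg w.
  rewrite /out_deg /in_deg !sum_deg_over; apply: leq_sum => B BBs.
  by case tlR: (tl B \in R); rewrite ?(closed B BBs tlR).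
have eqR := leqif_sum (fun w Rw => leqif_eq (le_in_out w Rw)).
have /forall_inP/(_ x (connect0 _ _))/eqP xbal :
    [forall (w | w \in R), in_deg w == out_deg w].
  by rewrite -eqR.2 eqn_leq eqR.1 out_le_in.
by rewrite xbal ltnn in xdef.
Qed.

Lemma flow_to_deficit (x : V) : in_deg x < out_deg x ->
  exists w (P : {set U}), [/\ P \subset Bs, w != x, out_deg w < in_deg w &
    forall y, \sum_(B in P) (tl B == y) + (y == w) =
              \sum_(B in P) (hd B == y) + (y == x)].
Proof.
move=> xdef; have [w /connectP[p pth lastp] wdef] := reachable_deficit xdef.
case: (shortenP pth) lastp => q qpth uq _ lastq.
have [P [PBs _ Pflow]] := path_flow qpth uq.
exists w, P; split=> //; last by rewrite lastq.
by apply: contraTneq wdef => ->; rewrite -leqNgt ltnW.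
Qed.

End Flow.

Definition swap_tuple (A : Type) (k : nat) (i j : 'I_k) (s : k.-tuple A)
  : k.-tuple A := [tuple tnth s (tperm i j l) | l < k].

Lemma tnth_swap_tuple (A : Type) (k : nat) (i j l : 'I_k) (s : k.-tuple A) :
  tnth (swap_tuple i j s) l = tnth s (tperm i j l).
Proof. exact: tnth_mktuple. Qed.

Lemma mem_swap_tuple (A : eqType) (k : nat) (i j : 'I_k) (s : k.-tuple A) (y : A) :
  (y \in swap_tuple i j s) = (y \in s).
Proof.
apply/tnthP/tnthP => -[l ->]; exists (tperm i j l); rewrite tnth_swap_tuple //.
by rewrite tpermK.
Qed.

Lemma uniq_swap_tuple (A : eqType) (k : nat) (i j : 'I_k) (s : k.-tuple A) :
  uniq s -> uniq (swap_tuple i j s).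
Proof.
move/tuple_uniqP => inj; apply/tuple_uniqP => a b.
by rewrite !tnth_swap_tuple => /inj/perm_inj.
Qed.

(* Moving one unit of h from position i to position j changes the sum of
   squares by 2 (h j - h i + 1). *)
Lemma sum_sq_transfer (k : nat) (h h' : 'I_k -> nat) (i j : 'I_k) : i != j ->
  (forall l, l != i -> l != j -> h' l = h l) -> h' i + 1 = h i -> h' j = h j + 1 ->
  \sum_(l < k) h' l ^ 2 + 2 * h i = \sum_(l < k) h l ^ 2 + 2 * h j + 2.
Proof.
move=> ij same hi hj.
have split (g : 'I_k -> nat) :
    \sum_(l < k) g l = g i + g j + \sum_(l < k | (l != i) && (l != j)) g l.
  by rewrite (bigD1 i) // (bigD1 j) 1?eq_sym //= addnA.
have rest : \sum_(l < k | (l != i) && (l != j)) h' l ^ 2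
    = \sum_(l < k | (l != i) && (l != j)) h l ^ 2.
  by apply: eq_bigr => l /andP[li lj]; rewrite same.
rewrite (split (fun l => h' l ^ 2)) (split (fun l => h l ^ 2)) rest -hi hj.
nia.
Qed.

Lemma unbalanced_gap (k m : nat) (g : 'I_k -> nat) (l : 'I_k) :
  \sum_(i < k) g i = k * m -> g l != m -> exists i j, g j + 2 <= g i.
Proof.
move=> sum_g gl.
have all_eq (h1 h2 : 'I_k -> nat) : (forall i, h1 i <= h2 i) ->
    \sum_(i < k) h1 i = \sum_(i < k) h2 i -> forall i, h1 i = h2 i.
  move=> le E i; have eqS := leqif_sum (fun i (_ : true) => leqif_eq (le i)).
  by move: eqS.2; rewrite E eqxx => /esym/forall_inP/(_ i isT)/eqP.
have const : \sum_(i < k) m = k * m by rewrite sum_nat_const card_ord.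
have [i gi] : exists i, m < g i.
  apply/existsP; move: gl; apply: contraNT => /existsPn noBig; apply/eqP.
  apply: (all_eq g (fun _ => m)) => [i|]; first by rewrite leqNgt noBig.
  by rewrite sum_g const.
have [j gj] : exists j, g j < m.
  apply/existsP; move: gl; apply: contraNT => /existsPn noSmall; apply/eqP/esym.
  apply: (all_eq (fun _ => m) g) => [j|]; first by rewrite leqNgt noSmall.
  by rewrite sum_g const.
by exists i, j; lia.
Qed.

Section Orderings.
Variables (T : finType) (k : nat) (Bs : {set {set T}}).
Implicit Types (f : {set T} -> k.-tuple T) (P : {set {set T}}).

Definition pos_count f (y : T) (l : 'I_k) : nat := \sum_(B in Bs) (tnth (f B) l == y).

Definition point_potential f (y : T) : nat := \sum_(l < k) pos_count f y l ^ 2.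

Definition potential f : nat := \sum_(y : T) point_potential f y.

(* Over all positions, y occurs once in each block containing it. *)
Lemma sum_pos_count f (y : T) :
  block_ordering Bs f -> \sum_(l < k) pos_count f y l = replication Bs y.
Proof.
move=> ord; rewrite /pos_count exchange_big /replication card_set_sum /=.
apply: eq_bigr => B BBs; have [u memf] := ord B BBs.
rewrite -memf -(count_uniq_mem y u) -sum1_count big_tuple [RHS]big_mkcond /=.
by apply: eq_bigr => l _; case: (tnth (f B) l == y).
Qed.

Definition swap_on P (i j : 'I_k) f : {set T} -> k.-tuple T :=
  fun B => if B \in P then swap_tuple i j (f B) else f B.

Lemma swap_on_ordering P i j f :
  block_ordering Bs f -> block_ordering Bs (swap_on P i j f).
Proof.
move=> ord B BBs; have [u memf] := ord B BBs; rewrite /swap_on.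
case: (B \in P); last exact: ord.
by split=> [|y]; rewrite ?uniq_swap_tuple ?mem_swap_tuple.
Qed.

Lemma pos_count_swap_on P i j f (y : T) (l : 'I_k) : P \subset Bs ->
  pos_count (swap_on P i j f) y l + \sum_(B in P) (tnth (f B) l == y)
  = pos_count f y l + \sum_(B in P) (tnth (f B) (tperm i j l) == y).
Proof.
move=> PBs; have inP (F : {set T} -> nat) :
    \sum_(B in Bs | B \in P) F B = \sum_(B in P) F B.
  by apply: eq_bigl => B; rewrite andb_idl // => /(subsetP PBs).
have onP : \sum_(B in P) (tnth (swap_on P i j f B) l == y)
    = \sum_(B in P) (tnth (f B) (tperm i j l) == y).
  by apply: eq_bigr => B BP; rewrite /swap_on BP tnth_swap_tuple.
have offP : \sum_(B in Bs | B \notin P) (tnth (swap_on P i j f B) l == y)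
    = \sum_(B in Bs | B \notin P) (tnth (f B) l == y).
  by apply: eq_bigr => B /andP[_ /negbTE BNP]; rewrite /swap_on BNP.
rewrite /pos_count (bigID (fun B => B \in P)) /= inP onP offP.
rewrite [\sum_(B in Bs) _](bigID (fun B => B \in P)) /= inP.
by rewrite addnC addnA addnAC.
Qed.

Lemma potential_decrease f f' (x w : T) (i j : 'I_k) :
  i != j -> w != x ->
  (forall y l, l != i -> l != j -> pos_count f' y l = pos_count f y l) ->
  (forall y, pos_count f' y i + (y == x) = pos_count f y i + (y == w)) ->
  (forall y, pos_count f' y j + (y == w) = pos_count f y j + (y == x)) ->
  pos_count f x j + 2 <= pos_count f x i -> pos_count f w i < pos_count f w j ->
  potential f' < potential f.
Proof.
move=> ij wx other cnt_i cnt_j xgap wgap.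
have xw : (x == w) = false by rewrite eq_sym (negbTE wx).
have at_x : point_potential f' x < point_potential f x.
  have := cnt_i x; have := cnt_j x; rewrite eqxx xw /= !addn0 => ej ei.
  by have := sum_sq_transfer ij (other x) ei ej; rewrite /point_potential; lia.
have at_w : point_potential f' w <= point_potential f w.
  have := cnt_i w; have := cnt_j w; rewrite eqxx eq_sym xw /= !addn0 => ej ei.
  have ji : j != i by rewrite eq_sym.
  have := sum_sq_transfer ji (fun l lj li => other w l li lj) ej ei.
  by rewrite /point_potential; lia.
have elsewhere y : y != x -> y != w -> point_potential f' y = point_potential f y.
  move=> /negbTE yx /negbTE yw; apply: eq_bigr => l _; congr (_ ^ 2).
  have [->|li] := eqVneq l i; first by have := cnt_i y; rewrite yx yw !addn0.
  have [->|lj] := eqVneq l j; first by have := cnt_j y; rewrite yx yw !addn0.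
  exact: other.
apply: (ltn_sum_pointwise _ at_x) => y.
have [->|yx] := eqVneq y x; first exact: ltnW.
have [->|yw] := eqVneq y w; first exact: at_w.
by rewrite elsewhere.
Qed.

(* The improvement step: swap positions i and j along the flow from x to a
   deficit point of the digraph B : (i-th entry) -> (j-th entry). *)
Lemma improve f (x : T) (i j : 'I_k) : block_ordering Bs f ->
  pos_count f x j + 2 <= pos_count f x i ->
  exists f', block_ordering Bs f' /\ potential f' < potential f.
Proof.
move=> ord xgap; have ij : i != j by apply: contraTneq xgap => ->; lia.
have xdef : in_deg Bs (fun B => tnth (f B) j) x
    < out_deg Bs (fun B => tnth (f B) i) x.
  by move: xgap; rewrite /in_deg /out_deg /pos_count; lia.
have [w [P [PBs wx wdef Pflow]]] := flow_to_deficit xdef.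
exists (swap_on P i j f); split; first exact: swap_on_ordering.
apply: (potential_decrease ij wx) => // [y l li lj | y | y].
- have := pos_count_swap_on i j f y l PBs.
  rewrite tpermD 1?eq_sym //; lia.
- by have := pos_count_swap_on i j f y i PBs; have := Pflow y; rewrite tpermL; lia.
- by have := pos_count_swap_on i j f y j PBs; have := Pflow y; rewrite tpermR; lia.
Qed.

(* If every replication number is k m, minimising the potential yields an
   ordering in which every point occurs m times at every position. *)
Lemma balance f (m : nat) : block_ordering Bs f ->
  (forall y, replication Bs y = k * m) ->
  exists f', block_ordering Bs f' /\ forall y l, pos_count f' y l = m.
Proof.
move=> ord rep; have [n lt_n] := ubnP (potential f).
elim: n f lt_n ord => // n IH f lt_n ord.
have [bal | /forallPn[y /forallPn[l yl]]] :=
  boolP [forall y, forall l, pos_count f y l == m].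
  by exists f; split=> // y l; apply/eqP; move/forallP/(_ y)/forallP: bal.
have [i [j gap]] := unbalanced_gap (etrans (sum_pos_count y ord) (rep y)) yl.
have [f' [ord' lt']] := improve ord gap.
by apply: IH ord'; lia.
Qed.

Lemma enum_ordering (x0 : T) : (forall B, B \in Bs -> #|B| = k) ->
  exists f, block_ordering Bs f.
Proof.
move=> Bk; exists (fun B : {set T} => insubd (nseq_tuple k x0) (enum B)) => B BBs.
have E : tval (insubd (nseq_tuple k x0) (enum B)) = enum B.
  by rewrite -[tval _]/(val _) val_insubd -cardE Bk // eqxx.
by split=> [|y]; rewrite -?[y \in _]/(y \in tval _) E ?enum_uniq ?mem_enum.
Qed.

End Orderings.

Theorem mainTheorem4 (T : finType) (t k lam : nat) (Bs : {set {set T}}) :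
  is_design t k lam Bs ->
  ((exists f : {set T} -> k.-tuple T,
      block_ordering Bs f /\ balanced_ordering Bs f)
   <-> #|T| %| #|Bs|)
  /\ (forall x : T, (#|T| %| #|Bs|) = (k %| #|[set B in Bs | x \in B]|)).
Proof.
move=> D; have [t1 tk kv Bk _] := D.
have k0 : 0 < k by lia.
have v0 : 0 < #|T| by lia.
have /card_gt0P[x0 _] := v0.
have rep x := design_replication x D.
split; last by move=> x; apply: dvdn_exchange v0 k0 (rep x).
split.
  case=> f [_ bal]; apply/dvdnP.
  by exists #|[set B in Bs | tnth (f B) (Ordinal k0) == x0]|; rewrite bal.
case/dvdnP => m bE.
have rep_m y : replication Bs y = k * m.
  by apply/eqP; rewrite -(eqn_pmul2l v0) rep bE; apply/eqP; lia.
have [f0 ord0] := enum_ordering x0 Bk.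
have [f [ord bal]] := balance ord0 rep_m.
exists f; split=> // x i.
by rewrite card_set_sum -/(pos_count Bs f x i) bal bE.
Qed.
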